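(* Let $F$ be a field with algebraic closure $\overline{F}$, and let $A\in F^{r\times r}$ and $B\in F^{s\times s}$. Then (a) $\displaystyle\sum_{\alpha\in\overline{F}}k_{A,\alpha}k_{B,\alpha}\le\dim(C(A,B))\le\sum_{\alpha\in\overline{F}}m_{A,\alpha}m_{B,\alpha}$; and (b) $(r-\mathrm{Rk}(A))(s-\mathrm{Rk}(B))\le\dim(C(A,B))\le(r-\mathrm{Rk}(A))(s-\mathrm{Rk}(B))+\mathrm{Rk}(A)\mathrm{Rk}(B)$.
   Context: $C(A,B):=\{X\in F^{r\times s}\mid AX=XB\}$. Regarding $A$ as acting on an $r$-dimensional vector space over $\overline{F}$, $k_{A,\alpha}$ and $m_{A,\alpha}$ denote the dimensions of the $\alpha$-eigenspace and of the generalized $\alpha$-eigenspace of $A$, respectively (so $c_A(t)=\prod_\alpha(t-\alpha)^{m_{A,\alpha}}$, with only finitely many nonzero terms); similarly for $B$. $\mathrm{Rk}(A)$ denotes the rank of $A$. *)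

From HB Require Import structures.
From mathcomp Require Import all_boot all_order all_algebra.
From mathcomp Require Import classical_sets fsbigop.
Set Implicit Arguments. Unset Strict Implicit. Unset Printing Implicit Defensive.
Import GRing.Theory.
Local Open Scope ring_scope.

Definition Cspace (F : fieldType) (r s : nat) (A : 'M[F]_r) (B : 'M[F]_s)
  : {vspace 'M[F]_(r, s)} :=
  lker (linfun (fun X : 'M[F]_(r, s) => A *m X - X *m B)).

Definition keig (L : fieldType) (n : nat) (A : 'M[L]_n) (a : L) : nat :=
  \rank (eigenspace A a).

Definition meig (L : fieldType) (n : nat) (A : 'M[L]_n) (a : L) : nat :=
  \rank (kermx ((A - a%:M) ^+ n)).

(* finitely supported sum over all of L *)
Definition fsumL (L : choiceType) (g : L -> nat) : nat :=
  (\big[addn/0%N]_(a \in [set: L]) g a)%N.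

(* Encoding X in F^(r x s) as the row vector mxvec X turns C(A,B) into the
   kernel of X |-> AX - XB, so its dimension is a matrix rank, unchanged when
   scalars are extended to L.  The space of the X with MX = 0 = XN has
   dimension (r - Rk M)(s - Rk N).
   (b) This space for (M, N) = (A, B) lies in C(A,B); conversely, rank-nullity
   for X |-> AX on C(A,B) leaves an image AX = XB whose columns lie in the
   column space of A and whose rows lie in the row space of B.
   (a) The spaces for (A - a, B - a) lie in C(A,B) and in the a-eigenspace of
   X |-> XB, so for distinct a they are independent.  Conversely the
   generalized eigenspaces of B are independent and span everything, so
   X in C(A,B) splits uniquely as a sum of X_a with rows in the generalized
   a-eigenspace; uniqueness forces every X_a into C(A,B), hence
   (A - a)^s X_a = X_a (B - a)^s = 0, and s may be replaced by r because the
   kernels of the powers of an r x r matrix stabilize from the r-th power on. *)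

From HB Require Import structures.
From mathcomp Require Import all_boot all_order all_algebra.
From mathcomp Require Import classical_sets fsbigop.
Set Implicit Arguments. Unset Strict Implicit. Unset Printing Implicit Defensive.
Import GRing.Theory.
Local Open Scope ring_scope.

Section TensorSpaces.
Variable K : fieldType.

(* A subspace of 'M_(r, s) is represented by a matrix whose rows are the mxvec
   encodings of a spanning family. *)
Definition tensmx p q r s (U : 'M[K]_(p, r)) (V : 'M[K]_(q, s)) : 'M_(p * q, r * s) :=
  lin_mx (mulmxr V \o mulmx U^T).

Variables (p q r s : nat) (U : 'M[K]_(p, r)) (V : 'M[K]_(q, s)).

Lemma mul_tensmx u : u *m tensmx U V = mxvec (U^T *m vec_mx u *m V).
Proof. exact: mul_rV_lin. Qed.

Lemma mxrank_tensmx : row_free U -> row_free V -> \rank (tensmx U V) = (p * q)%N.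
Proof.
move=> freeU freeV; apply/eqP; change (row_free (tensmx U V)).
rewrite -kermx_eq0; apply/rowV0P => v /sub_kermxP.
rewrite mul_tensmx => /eqP; rewrite mxvec_eq0 mulmx_free_eq0 // -trmx_eq0 trmx_mul trmxK.
by rewrite mulmx_free_eq0 // trmx_eq0 => /eqP/(congr1 mxvec); rewrite vec_mxK linear0.
Qed.

Lemma sub_tensmx v : row_free U ->
  (v <= tensmx U V)%MS = ((vec_mx v)^T <= U)%MS && (vec_mx v <= V)%MS.
Proof.
move=> /row_freeP[U' UU'1]; apply/idP/andP => [/submxP[w ->] | []].
  by rewrite mul_tensmx mxvecK !trmx_mul trmxK mulmxA !submxMl; split.
move=> /submxP[E dE] /submxP[D dD].
have {dE} vE : vec_mx v = U^T *m E^T by rewrite -[vec_mx v]trmxK dE trmx_mul.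
suff -> : v = mxvec (U'^T *m D) *m tensmx U V by apply: submxMl.
rewrite mul_tensmx mxvecK -[v]vec_mxK; congr mxvec.
by rewrite -!mulmxA -dD [in RHS]vE (mulmxA U'^T) -trmx_mul UU'1 trmx1 mul1mx -vE.
Qed.

End TensorSpaces.

Section Bikernel.
Variables (K : fieldType) (r s : nat).

Definition bikermx (M : 'M[K]_r) (N : 'M[K]_s) : 'M_(r * s) :=
  <<tensmx (row_base (kermx M^T)) (row_base (kermx N))>>%MS.

Lemma sub_bikermx M N v :
  (v <= bikermx M N)%MS = (M *m vec_mx v == 0) && (vec_mx v *m N == 0).
Proof.
rewrite genmxE sub_tensmx ?row_base_free // !eq_row_base !(sameP sub_kermxP eqP).
by rewrite -trmx_mul trmx_eq0.
Qed.

Lemma mxrank_bikermx M N : \rank (bikermx M N) = ((r - \rank M) * (s - \rank N))%N.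
Proof.
by rewrite genmxE mxrank_tensmx ?row_base_free // !mxrank_ker mxrank_tr.
Qed.

End Bikernel.

Section Sylvester.
Variables (K : fieldType) (r s : nat) (A : 'M[K]_r) (B : 'M[K]_s).

Definition Cmx : 'M_(r * s) := kermx (lin_mx (mulmx A \- mulmxr B)).

Lemma sub_Cmx v : (v <= Cmx)%MS = (A *m vec_mx v == vec_mx v *m B).
Proof. by rewrite (sameP sub_kermxP eqP) mul_rV_lin mxvec_eq0 subr_eq0. Qed.

Lemma bikermx_sub_Cmx a : (bikermx (A - a%:M) (B - a%:M) <= Cmx)%MS.
Proof.
apply/row_subP => i; rewrite sub_Cmx.
have := row_sub i (bikermx (A - a%:M) (B - a%:M)); rewrite sub_bikermx.
by rewrite mulmxBl mulmxBr mul_scalar_mx mul_mx_scalar !subr_eq0 => /andP[/eqP-> /eqP->].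
Qed.

Lemma mxrank_Cmx_ge : ((r - \rank A) * (s - \rank B) <= \rank Cmx)%N.
Proof.
by have := mxrankS (bikermx_sub_Cmx 0); rewrite mxrank_bikermx !raddf0 !addr0.
Qed.

Lemma mxrank_Cmx_le :
  (\rank Cmx <= (r - \rank A) * (s - \rank B) + \rank A * \rank B)%N.
Proof.
rewrite -(mxrank_mul_ker Cmx (lin_mx (mulmx A))) addnC leq_add //.
  rewrite -mxrank_bikermx; apply/mxrankS/row_subP => i.
  have := row_sub i (Cmx :&: kermx (lin_mx (mulmx A)))%MS.
  rewrite sub_capmx sub_Cmx sub_bikermx => /andP[/eqP AXB /sub_kermxP].
  by rewrite mul_rV_lin /= => /eqP; rewrite mxvec_eq0 -AXB => ->.
apply: (@leq_trans (\rank (tensmx (row_base A^T) (row_base B)))); last first.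
  by rewrite mxrank_tensmx ?row_base_free // mxrank_tr.
apply/mxrankS/row_subP => i; rewrite row_mul.
have := row_sub i Cmx; rewrite sub_Cmx mul_rV_lin sub_tensmx ?row_base_free //.
by rewrite /= mxvecK !eq_row_base trmx_mul submxMl => /eqP ->; rewrite submxMl.
Qed.

End Sylvester.

Section VectorEncoding.
Import VectorInternalTheory.
Variables (K : fieldType) (m1 n1 m2 n2 : nat).

Lemma dim_lker_linfun (h : {linear 'M[K]_(m1, n1) -> 'M[K]_(m2, n2)}) :
  \dim (lker (linfun h)) = \rank (kermx (lin_mx h)).
Proof.
have -> : linfun h = Hom (lin1_mx (v2r \o h \o r2v)) by rewrite unlock.
rewrite /dimv /lker mx2vsK /= !mxrank_ker; congr (_ - _)%N.
(* The coordinates v2r of the vectType 'M_(m, n) are opaque: they agree with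
   mxvec only up to the invertible changes of coordinates P and Q. *)
pose P := lin1_mx (mxvec \o @r2v K 'M[K]_(m1, n1)).
pose P' := lin1_mx (@v2r K 'M[K]_(m1, n1) \o vec_mx).
pose Q := lin1_mx (@v2r K 'M[K]_(m2, n2) \o vec_mx).
pose Q' := lin1_mx (mxvec \o @r2v K 'M[K]_(m2, n2)).
have -> : lin1_mx (v2r \o h \o r2v) = P *m lin_mx h *m Q.
  apply/row_matrixP => i.
  by rewrite !rowE /P /Q !mulmxA !mul_rV_lin1 /= !mxvecK.
have /mulmx1_unit[unitP _] : P *m P' = 1%:M.
  apply/row_matrixP => i.
  by rewrite !rowE /P /P' mulmxA mulmx1 !mul_rV_lin1 /= mxvecK r2vK.
have /mulmx1_unit[_ unitQ] : Q' *m Q = 1%:M.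
  apply/row_matrixP => i.
  by rewrite !rowE /Q /Q' mulmxA mulmx1 !mul_rV_lin1 /= mxvecK r2vK.
by rewrite mxrankMfree ?row_free_unit // eqmxMfull ?row_full_unit.
Qed.

End VectorEncoding.

Lemma dim_Cspace (K : fieldType) r s (A : 'M[K]_r) (B : 'M[K]_s) :
  \dim (Cspace A B) = \rank (Cmx A B).
Proof. exact: (dim_lker_linfun (mulmx A \- mulmxr B)). Qed.

Lemma map_Cmx (K L : fieldType) (f : {rmorphism K -> L}) r s
    (A : 'M[K]_r) (B : 'M[K]_s) :
  map_mx f (Cmx A B) = Cmx (map_mx f A) (map_mx f B).
Proof.
rewrite map_kermx (map_lin_mx (gf := mulmx (map_mx f A) \- mulmxr (map_mx f B))) //.
by move=> X; rewrite /= map_mxB !map_mxM.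
Qed.

Section PowerStabilization.
Variables (K : fieldType) (n : nat) (M : 'M[K]_n).

Lemma expmxS_sub k : (M ^+ k.+1 <= M ^+ k)%MS.
Proof. by rewrite exprS -mulmxE submxMl. Qed.

Lemma exists_mxrank_expS_eq :
  exists2 j, (j <= n)%N & \rank (M ^+ j.+1) = \rank (M ^+ j).
Proof.
have [j /eqP eq_j | neq] :=
  pickP (fun j : 'I_n.+1 => \rank (M ^+ j.+1) == \rank (M ^+ j)).
  by exists j => //; rewrite -ltnS ltn_ord.
have rank_drop j : (j <= n.+1)%N -> (\rank (M ^+ j) + j <= n)%N.
  elim: j => [|j IHj] lejn; first by rewrite expr0 mxrank1 addn0.
  have ltj : (\rank (M ^+ j.+1) < \rank (M ^+ j))%N.
    by rewrite ltn_neqAle (neq (Ordinal lejn)) mxrankS ?expmxS_sub.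
  by rewrite addnS; apply: leq_trans (IHj (ltnW lejn)); rewrite ltn_add2r.
by have := rank_drop n.+1 (leqnn _); rewrite addnS ltnNge leq_addl.
Qed.

Lemma eqmx_expn k : (n <= k)%N -> (M ^+ k :=: M ^+ n)%MS.
Proof.
have [j lejn eq_j] := exists_mxrank_expS_eq.
have stab i : (M ^+ (j + i) :=: M ^+ j)%MS.
  elim: i => [|i IHi]; first by rewrite addn0.
  apply: eqmx_trans (_ : M ^+ j.+1 :=: M ^+ j)%MS; last first.
    by apply/eqmxP; rewrite -(mxrank_leqif_eq (expmxS_sub j)) eq_j.
  by rewrite addnS !exprSr -!mulmxE; apply: eqmxMr.
move=> lenk; have := stab (k - j)%N; have := stab (n - j)%N.
rewrite !subnKC // ?(leq_trans lejn) // => En Ek.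
exact: eqmx_trans Ek (eqmx_sym En).
Qed.

Lemma kermx_exp_le k l : (k <= l)%N -> (kermx (M ^+ k) <= kermx (M ^+ l))%MS.
Proof.
move=> lekl; apply/sub_kermxP.
by rewrite -(subnKC lekl) exprD -mulmxE mulmxA mulmx_ker mul0mx.
Qed.

Lemma kermx_expn k : (kermx (M ^+ k) <= kermx (M ^+ n))%MS.
Proof.
have [lekn | /ltnW lenk] := leqP k n; first exact: kermx_exp_le.
have sub_nk := kermx_exp_le lenk.
by rewrite -(mxrank_leqif_sup sub_nk).2 !mxrank_ker (eqmx_expn lenk).
Qed.

Lemma mulmx_expn_eq0 k p (X : 'M_(n, p)) : M ^+ k *m X = 0 -> M ^+ n *m X = 0.
Proof.
have [lekn | /ltnW lenk] := leqP k n.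
  have -> : M ^+ n = M ^+ (n - k) *m M ^+ k by rewrite mulmxE -exprD subnK.
  by rewrite -mulmxA => ->; rewrite mulmx0.
have /submxP[D ->] : (M ^+ n <= M ^+ k)%MS by rewrite (eqmx_expn lenk).
by rewrite -mulmxA => ->; rewrite mulmx0.
Qed.

Lemma row_free_exp k : row_free M -> row_free (M ^+ k).
Proof.
move=> freeM; elim: k => [|k IHk]; first by rewrite expr0 /row_free mxrank1.
by rewrite exprSr -mulmxE /row_free mxrankMfree.
Qed.

End PowerStabilization.

Lemma mxdirect_sumsS (K : fieldType) (I : finType) (P : pred I) n
    (A_ B_ : I -> 'M[K]_n) :
  (forall i, P i -> A_ i <= B_ i)%MS ->
  mxdirect (\sum_(i | P i) B_ i) -> mxdirect (\sum_(i | P i) A_ i).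
Proof.
move=> sAB /mxdirect_sumsP dirB; apply/mxdirect_sumsP => i Pi.
apply/eqP; rewrite -submx0 -[X in (_ <= X)%MS](dirB i Pi).
by apply: capmxS (sAB i Pi) (sumsmxS _) => j /andP[Pj _]; apply: sAB.
Qed.

Lemma sub_geigenspaceP (K : fieldType) m n (M : 'M[K]_n) a (X : 'M_(m, n)) :
  reflect (X *m (M - a%:M) ^+ n = 0) (X <= geigenspace M a)%MS.
Proof.
case: n => [|n] in M X *; last by rewrite geigenspaceE; apply: sub_kermxP.
by rewrite [X]thinmx0 sub0mx mul0mx; apply: ReflectT.
Qed.

Lemma sum_geigenspace_full (K : fieldType) n (M : 'M[K]_n) (I : finType)
    (a_ : I -> K) (c_ : I -> nat) :
  injective a_ -> char_poly M = \prod_i ('X - (a_ i)%:P) ^+ c_ i ->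
  (1%:M <= \sum_i geigenspace M (a_ i))%MS.
Proof.
case: n M => [|n] M inj_a charM; first by rewrite thinmx0 sub0mx.
have coprime_a : {in predT &, forall i j, j != i ->
    coprimep (('X - (a_ i)%:P) ^+ c_ i) (('X - (a_ j)%:P) ^+ c_ j)}.
  move=> i j _ _ neq_ji.
  by rewrite coprimep_expl ?coprimep_expr // coprimep_XsubC root_XsubC (inj_eq inj_a).
have full_char : (1%:M <= kermxpoly M (char_poly M))%MS.
  by rewrite (kermxpoly_min (mxminpoly_dvd_char M)).
apply: submx_trans full_char _.
rewrite charM (kermxpoly_prod _ coprime_a); apply/sumsmxS => i _.
rewrite geigenspaceE /kermxpoly rmorphXn /= rmorphB /= horner_mx_X horner_mx_C.
exact: kermx_expn.
Qed.

Lemma meig_eq0 (K : fieldType) n (M : 'M[K]_n) a : ~~ eigenvalue M a -> meig M a = 0%N.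
Proof.
rewrite /eigenvalue negbK kermx_eq0 => /(row_free_exp n) /eqP.
by rewrite /meig mxrank_ker => ->; rewrite subnn.
Qed.

Lemma closed_spectrum (L : closedFieldType) n (M : 'M[L]_n) :
  exists k (a_ : 'I_k -> L), [/\ injective a_,
    (1%:M <= \sum_i geigenspace M (a_ i))%MS &
    forall a, eigenvalue M a -> exists i, a = a_ i].
Proof.
have [zs charM] := closed_field_poly_normal (char_poly M).
rewrite (monicP (char_poly_monic M)) scale1r in charM.
pose rs := in_tuple (undup zs).
have inj_rs : injective (tnth rs) by apply/tuple_uniqP/undup_uniq.
exists (size (undup zs)), (tnth rs); split => //.
- apply: (sum_geigenspace_full (c_ := fun i => count_mem (tnth rs i) zs)) => //.
  by rewrite charM -(prodr_undup_exp_count zs xpredT) big_tnth.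
- move=> a; rewrite eigenvalue_root_char charM root_prod_XsubC -mem_undup.
  by move=> /(tnthP rs)[i ->]; exists i.
Qed.

Section Intertwiners.
Variables (K : fieldType) (r s : nat) (A : 'M[K]_r) (B : 'M[K]_s).

Lemma intertwineX (X : 'M_(r, s)) a k :
  A *m X = X *m B -> (A - a%:M) ^+ k *m X = X *m (B - a%:M) ^+ k.
Proof.
move=> AXB; have AaX : (A - a%:M) *m X = X *m (B - a%:M).
  by rewrite mulmxBl mulmxBr AXB mul_scalar_mx mul_mx_scalar.
elim: k => [|k IHk]; first by rewrite !expr0 mul1mx mulmx1.
by rewrite !exprS -!mulmxE -mulmxA IHk !mulmxA AaX.
Qed.

Lemma intertwine_dsumsmx (I : finType) (G_ : I -> 'M[K]_s) (X_ : I -> 'M[K]_(r, s)) :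
    mxdirect (\sum_i G_ i) -> (forall i, stablemx (G_ i) B) ->
    (forall i, X_ i <= G_ i)%MS ->
  A *m (\sum_i X_ i) = (\sum_i X_ i) *m B -> forall i, A *m X_ i = X_ i *m B.
Proof.
move=> dirG stabG XG AXB i; apply/eqP; rewrite -subr_eq0.
pose D j := A *m X_ j - X_ j *m B.
have DG j : (D j <= G_ j)%MS.
  rewrite addmx_sub ?eqmx_opp //; first exact: submx_trans (submxMl A _) (XG j).
  exact: submx_trans (submxMr B (XG j)) (stabG j).
have sumD : \sum_j D j = 0 by rewrite sumrB -mulmx_sumr -mulmx_suml AXB subrr.
have [Z _ _ uniqZ] := sub_dsumsmx dirG (sub0mx r (\sum_j G_ j)%MS).
have -> : A *m X_ i - X_ i *m B = Z i.
  by apply: (uniqZ D (fun j _ => DG j) (esym sumD)).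
by rewrite -(uniqZ (fun=> 0)) // => [j _|]; rewrite ?sub0mx ?big1.
Qed.

Lemma sum_keig_le_Cmx (I : finType) (a_ : I -> K) : injective a_ ->
  (\sum_i keig A (a_ i) * keig B (a_ i) <= \rank (Cmx A B))%N.
Proof.
move=> inj_a; pose W i := bikermx (A - (a_ i)%:M) (B - (a_ i)%:M).
have W_eig i : (W i <= eigenspace (lin_mx (mulmxr B)) (a_ i))%MS.
  apply/row_subP => j; have := row_sub j (W i); rewrite sub_bikermx.
  rewrite mulmxBr mul_mx_scalar subr_eq0 => /andP[_ /eqP XB].
  by apply/eigenspaceP; rewrite mul_rV_lin /= XB linearZ /= vec_mxK.
have dirW : mxdirect (\sum_i W i).
  apply: mxdirect_sumsS (fun i _ => W_eig i) _.
  exact: mxdirect_sum_eigenspace _ (in2W inj_a).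
have <- : \rank (\sum_i W i) = (\sum_i keig A (a_ i) * keig B (a_ i))%N.
  rewrite (mxdirectP dirW); apply: eq_bigr => i _.
  by rewrite /W /= mxrank_bikermx /keig /eigenspace !mxrank_ker.
by apply: mxrankS; apply/sumsmx_subP => i _; apply: bikermx_sub_Cmx.
Qed.

Lemma Cmx_le_sum_meig (I : finType) (a_ : I -> K) : injective a_ ->
    (1%:M <= \sum_i geigenspace B (a_ i))%MS ->
  (\rank (Cmx A B) <= \sum_i meig A (a_ i) * meig B (a_ i))%N.
Proof.
move=> inj_a fullG.
pose W i := bikermx ((A - (a_ i)%:M) ^+ r) ((B - (a_ i)%:M) ^+ s).
suff sub_CW : (Cmx A B <= \sum_i W i)%MS.
  apply: leq_trans (mxrankS sub_CW) (leq_trans (mxrank_sum_leqif _).1 _).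
  by apply/eq_leq/eq_bigr => i _; rewrite /W /= mxrank_bikermx /meig !mxrank_ker.
apply/row_subP => j; set v := row j _.
have := row_sub j (Cmx A B); rewrite -/v sub_Cmx => /eqP AXB.
have dirG : mxdirect (\sum_i geigenspace B (a_ i)).
  exact: mxdirect_sum_geigenspace _ (in2W inj_a).
have /(sub_dsumsmx dirG)[X_ XG defX _] := submx_trans (submx1 (vec_mx v)) fullG.
have stabG i : stablemx (geigenspace B (a_ i)) B.
  exact: comm_mx_stable_geigenspace.
rewrite defX in AXB.
have AXiB := intertwine_dsumsmx dirG stabG (fun i => XG i isT) AXB.
rewrite -[v]vec_mxK defX linear_sum /=; apply: summx_sub_sums => i _.
have XiB : X_ i *m (B - (a_ i)%:M) ^+ s = 0 by apply/sub_geigenspaceP/XG.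
rewrite sub_bikermx mxvecK; apply/andP; split; apply/eqP => //.
by apply: (mulmx_expn_eq0 (k := s)); rewrite intertwineX ?AXiB.
Qed.

End Intertwiners.

Lemma fsumL_inj (L : choiceType) (I : finType) (a_ : I -> L) (g : L -> nat) :
  injective a_ -> (forall a, (forall i, a != a_ i) -> g a = 0%N) ->
  fsumL g = (\sum_i g (a_ i))%N.
Proof.
move=> inj_a g0; rewrite /fsumL (@fsbigE _ _ _ _ _ (map a_ (enum I))).
- by rewrite big_map big_enum_cond; apply: eq_bigl => i; rewrite in_setT.
- by rewrite map_inj_uniq ?enum_uniq.
- by [].
- move=> a _ a_out; apply: g0 => i; apply: contraNneq a_out => ->.
  by rewrite map_f ?mem_enum.
Qed.

Lemma Cmx_eig_bounds (L : closedFieldType) r s (A : 'M[L]_r) (B : 'M[L]_s) :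
  (fsumL (fun a => keig A a * keig B a) <= \rank (Cmx A B))%N /\
  (\rank (Cmx A B) <= fsumL (fun a => meig A a * meig B a))%N.
Proof.
have [k [a_ [inj_a fullG eig_a]]] := closed_spectrum B.
have not_eig a : (forall i, a != a_ i) -> ~~ eigenvalue B a.
  by move=> a_out; apply/negP => /eig_a[i /eqP]; apply/negP.
rewrite !(fsumL_inj inj_a) => [|a /not_eig/meig_eq0->|a /not_eig]; last first.
- by rewrite /eigenvalue negbK /keig => /eqP->; rewrite mxrank0 muln0.
- by rewrite muln0.
by split; [apply: sum_keig_le_Cmx | apply: Cmx_le_sum_meig].
Qed.

Theorem theorem5p1 (F : fieldType) (L : closedFieldType) (f : {rmorphism F -> L})
  (Lalg : forall x : L, exists2 p : {poly F}, p != 0 & root (map_poly f p) x)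
  (r s : nat) (A : 'M[F]_r) (B : 'M[F]_s) :
  let AL := map_mx f A in let BL := map_mx f B in
  let d := \dim (Cspace A B) in
  ((fsumL (fun a => keig AL a * keig BL a) <= d)%N /\
   (d <= fsumL (fun a => meig AL a * meig BL a))%N) /\
  ((r - \rank A) * (s - \rank B) <= d)%N /\
  (d <= (r - \rank A) * (s - \rank B) + \rank A * \rank B)%N.
Proof.
move=> AL BL d; rewrite /d dim_Cspace.
split; last by split; [apply: mxrank_Cmx_ge | apply: mxrank_Cmx_le].
by rewrite -(mxrank_map f) map_Cmx; apply: Cmx_eig_bounds.
Qed.
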